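(* Let $C_1, C_2$ be Banach spaces, let $f: C_1 \to C_2$ be a bounded linear map, and let $\mathfrak{D}(f) = (f_n : C_1^n \to C_2^n)_{n\in\mathbb{N}}$, together with maps $\pi_1^n: C_1 \to C_1^n$, $\pi_2^n: C_2\to C_2^n$, be a structure preserving discretization of $f$. Then $\mathfrak{D}(f)$ is convergent if and only if for each $n$ and $i=1,2$ there exist injective contractive linear maps $s_i^n : C_i^n \to C_i$ such that for all $x \in C_1$, $$\lim_{n\to\infty}\|x - s_1^n(\pi_1^n(x))\| = 0 \quad\text{and}\quad \lim_{n\to\infty}\|f(x) - s_2^n(f_n(\pi_1^n(x)))\| = 0 .$$
   Context: Objects are Banach spaces and arrows are bounded linear maps. A discretization $\mathfrak{D}(f)$ of an arrow $f: C_1\to C_2$ is a sequence of arrows $f_n: C_1^n \to C_2^n$ together with surjective contractive linear maps $\pi_i^n: C_i \to C_i^n$ ($i=1,2$, $n\in\mathbb{N}$) such that $\lim_{n\to\infty}\|\pi_i^n x\|_{C_i^n} = \|x\|_{C_i}$ for all $x\in C_i$. Suppose $C_1,C_2$ are objects of a category $\mathcal{C}$ and $(C_1,f)$ is an object of a category $\mathcal{B}$. The discretization is structure preserving if (1) $(C_1^n, f_n)$ is an object of $\mathcal{B}$ and $C_1^n$ an object of $\mathcal{C}$ for all $n$, and (2) $\|f_n(\pi_1^n(x)) - \pi_2^n(f(x))\| \to 0$ as $n\to\infty$ for all $x\in C_1$. Let $\mathrm{Gr}(f)=\{(x,f(x)) : x\in C_1\}\subset C_1\times C_2$ with coordinate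 projections $p_1,p_2$. The discretization is convergent if for $i=1,2$ there exist injective contractive linear maps $s_i^n: C_i^n\to C_i$ (section maps) with $\lim_{n\to\infty}\|x - s_i^n(\pi_i^n(x))\| = 0$ for all $x \in p_i(\mathrm{Gr}(f))$. *)

From HB Require Import structures.
From mathcomp Require Import all_boot all_order all_algebra.
From mathcomp Require Import all_classical all_reals all_analysis.
Set Implicit Arguments. Unset Strict Implicit. Unset Printing Implicit Defensive.
Import Order.TTheory GRing.Theory Num.Theory.
Import numFieldNormedType.Exports.
Local Open Scope classical_set_scope.
Local Open Scope ring_scope.

Section Defs.
Variable R : realType.

Definition bounded_linear (V W : normedModType R) (g : V -> W) : Prop :=
  linear g /\ exists M : R, forall x, `|g x| <= M * `|x|.

Definition contractive (V W : normedModType R) (g : V -> W) : Prop :=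
  forall x, `|g x| <= `|x|.

Definition discr_proj (V : normedModType R) (Vn : nat -> normedModType R)
  (pi : forall n, V -> Vn n) : Prop :=
  (forall n, linear (pi n) /\ (forall y, exists x, pi n x = y) /\ contractive (pi n)) /\
  (forall x, (fun n => `|pi n x|) @ \oo --> `|x|).

Definition discretization (C1 C2 : normedModType R)
  (C1n C2n : nat -> normedModType R)
  (fn : forall n, C1n n -> C2n n)
  (pi1 : forall n, C1 -> C1n n) (pi2 : forall n, C2 -> C2n n) : Prop :=
  (forall n, bounded_linear (fn n)) /\ discr_proj pi1 /\ discr_proj pi2.

(* structure preservation, relative to abstract categories C (objC) and B (objB);
   objects of B are pairs (V, g) with g : V -> W an arrow. *)
Definition structure_preserving
  (objC : completeNormedModType R -> Prop)
  (objB : forall V W : completeNormedModType R, (V -> W) -> Prop)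
  (C1 C2 : completeNormedModType R) (f : C1 -> C2)
  (C1n C2n : nat -> completeNormedModType R)
  (fn : forall n, C1n n -> C2n n)
  (pi1 : forall n, C1 -> C1n n) (pi2 : forall n, C2 -> C2n n) : Prop :=
  (forall n, objB (C1n n) (C2n n) (fn n) /\ objC (C1n n)) /\
  (forall x, (fun n => `|fn n (pi1 n x) - pi2 n (f x)|) @ \oo --> 0).

Definition graph (V W : Type) (g : V -> W) : set (V * W) :=
  [set p | p.2 = g p.1].

Definition section_maps (V : normedModType R) (Vn : nat -> normedModType R)
  (s : forall n, Vn n -> V) : Prop :=
  forall n, linear (s n) /\ injective (s n) /\ contractive (s n).

Definition convergent (C1 C2 : normedModType R)
  (C1n C2n : nat -> normedModType R) (f : C1 -> C2)
  (pi1 : forall n, C1 -> C1n n) (pi2 : forall n, C2 -> C2n n) : Prop :=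
  exists (s1 : forall n, C1n n -> C1) (s2 : forall n, C2n n -> C2),
    section_maps s1 /\ section_maps s2 /\
    (forall x, x \in fst @` graph f ->
        (fun n => `|x - s1 n (pi1 n x)|) @ \oo --> 0) /\
    (forall y, y \in snd @` graph f ->
        (fun n => `|y - s2 n (pi2 n y)|) @ \oo --> 0).

End Defs.

From HB Require Import structures.
From mathcomp Require Import all_boot all_order all_algebra.
From mathcomp Require Import all_classical all_reals all_analysis.
Import Order.TTheory GRing.Theory Num.Theory.
Import numFieldNormedType.Exports.
Local Open Scope classical_set_scope.
Local Open Scope ring_scope.

(* A linear contraction is 1-Lipschitz, so by structure preservation
   s_2^n (f_n (pi_1^n x)) and s_2^n (pi_2^n (f x)) are asymptotically equal;
   since the second projection of Gr(f) is the range of f, the two convergence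
   conditions on C_2 are equivalent.  Only the asymptotic commutation
   ||f_n (pi_1^n x) - pi_2^n (f x)|| -> 0 is used. *)

Section LinearContraction.
Variables (R : realType) (V W : normedModType R) (s : W -> V).
Hypotheses (s_linear : linear s) (s_contractive : contractive s).

Lemma linear_subr (u v : W) : s (u - v) = s u - s v.
Proof. by rewrite addrC -scaleN1r s_linear scaleN1r addrC. Qed.

Lemma contractive_linear_distB (u v : W) : `|s u - s v| <= `|u - v|.
Proof. by rewrite -linear_subr s_contractive. Qed.

End LinearContraction.

Lemma cvg_section_dist {R : realType} {V : normedModType R}
    {W : nat -> normedModType R} {s : forall n, W n -> V} {y : V}
    {a b : forall n, W n} :
  (forall n, linear (s n) /\ contractive (s n)) ->
  (fun n => `|y - s n (a n)|) @ \oo --> 0 ->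
  (fun n => `|a n - b n|) @ \oo --> 0 ->
  (fun n => `|y - s n (b n)|) @ \oo --> 0.
Proof.
move=> s_lc ya_cvg ab_cvg.
have sum_cvg : (fun n => `|y - s n (a n)| + `|a n - b n|) @ \oo --> 0.
  by rewrite -[0]addr0; apply: cvgD.
apply: (squeeze_cvgr _ (cvg_cst 0) sum_cvg).
near=> n; rewrite normr_ge0 /=.
apply: (le_trans (ler_distD (s n (a n)) _ _)); rewrite lerD2l.
by case: (s_lc n) => lin con; apply: contractive_linear_distB.
Unshelve. all: by end_near.
Qed.

Lemma section_maps_lc {R : realType} {V : normedModType R}
    {Vn : nat -> normedModType R} {s : forall n, Vn n -> V} :
  section_maps s -> forall n, linear (s n) /\ contractive (s n).
Proof. by move=> s_sec n; case: (s_sec n) => lin [_ con]. Qed.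

Lemma image_fst_graph (U V : Type) (g : U -> V) : fst @` graph g = setT.
Proof. by apply/seteqP; split=> [x //|x _]; exists (x, g x). Qed.

Lemma image_snd_graph (U V : Type) (g : U -> V) : snd @` graph g = range g.
Proof.
apply/seteqP; split=> y.
- by case=> -[x y'] gxy <-; exists x => //; rewrite gxy.
- by case=> x _ <-; exists (x, g x).
Qed.

Theorem mainTheorem1 (R : realType)
  (objC : completeNormedModType R -> Prop)
  (objB : forall V W : completeNormedModType R, (V -> W) -> Prop)
  (C1 C2 : completeNormedModType R) (f : C1 -> C2)
  (C1n C2n : nat -> completeNormedModType R)
  (fn : forall n, C1n n -> C2n n)
  (pi1 : forall n, C1 -> C1n n) (pi2 : forall n, C2 -> C2n n) :
  bounded_linear f ->
  objC C1 -> objC C2 -> objB C1 C2 f ->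
  discretization fn pi1 pi2 ->
  structure_preserving objC objB f fn pi1 pi2 ->
  (convergent f pi1 pi2 <->
   exists (s1 : forall n, C1n n -> C1) (s2 : forall n, C2n n -> C2),
     section_maps s1 /\ section_maps s2 /\
     (forall x : C1,
        ((fun n => `|x - s1 n (pi1 n x)|) @ \oo --> 0) /\
        ((fun n => `|f x - s2 n (fn n (pi1 n x))|) @ \oo --> 0))).
Proof.
move=> _ _ _ _ _ [_ commute].
split=> -[s1 [s2 [s1_sec [s2_sec conv]]]]; exists s1, s2; do 2!split=> //.
- case: conv => conv1 conv2 x; split.
    by apply/conv1; rewrite image_fst_graph in_setT.
  apply: (cvg_section_dist (section_maps_lc s2_sec)).
    by apply/conv2; rewrite image_snd_graph inE; exists x.
  by under eq_fun do rewrite distrC; apply: commute.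
- split=> [x _|y]; first by case: (conv x).
  rewrite image_snd_graph inE => -[x _ <-].
  exact: (cvg_section_dist (section_maps_lc s2_sec) (proj2 (conv x)) (commute x)).
Qed.
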